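(* Let $S$ be an instance of 3-Partition (with $n_1\ge\cdots\ge n_{3m}$) and let $w_S=\mathrm{Load}_S\,\mathrm{Dist}_S\,\mathrm{Ver}_S$ be the string defined below. Then every accepting computation $\varepsilon\,\|\,w_S\vdash^*\varepsilon\,\|\,\varepsilon$ of the queue automaton begins as $$\varepsilon\,\|\,w_S \vdash^* e_0(b^{2B}e)^m\,\|\,\mathrm{Dist}_S\,\mathrm{Ver}_S,$$ and in the subsequent part of the computation, for each $i=1,\dots,m$, the $i$-th occurrence of the subword $(a_1b^Ba_2)^3$ in $\mathrm{Dist}_S$ is consumed by the $i$-th occurrence of $b^{2B}$ in the queue.
   Context: Queue automaton: a configuration is written $Q\,\|\,x$ ($Q$ = queue contents, $x$ = remaining input); a step from $Q\,\|\,\sigma x$ ($\sigma$ a symbol) goes either to $Q\sigma\,\|\,x$ (push) or, if $Q=\sigma Q'$, to $Q'\,\|\,x$ (match/pop). $\vdash^*$ is zero or more steps; $\varepsilon$ is the empty string; an accepting computation of $w$ is a computation $\varepsilon\,\|\,w\vdash^*\varepsilon\,\|\,\varepsilon$. If a computation passes through $u_1u_2u_3\,\|\,x_1x_2x_3\vdash^* u_2u_3z_1\,\|\,x_2x_3\vdash^* u_3z_1z_2\,\|\,x_3$, then $x_2$ is consumed by $u_2$ (with resultant $z_2$). An instance of 3-Partition is a sequence $S=\langle n_i:1\le i\le 3m\rangle$ of natural numbers such that $B=(\sum_{i=1}^{3m}n_i)/m$ is an integer and $B/4<n_i<B/2$ for all $i$; throughout, the $n_i$ are assumed to be in non-increasing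 order. The alphabet is $\{a_1,a_2,b,e_0,e,c_1,c_2,x,y\}$; $u^i$ denotes $i$ concatenated copies of $u$ and $\prod_{\ell=1}^k u_\ell=u_1u_2\cdots u_k$. Define $U_\ell=a_1^2b^\ell a_2^2$, $v_\ell=c_1x^\ell y^\ell c_2$, $D_k=U_{n_k}^{3m-k+1}$, $E_k=U_B^{3m-k}\,a_1b^{n_k}a_2\,U_B^{3m-k}$, $F_k=U_B^{2(3m-k)}$, and $\mathrm{Load}_S=e_0\prod_{i=1}^m(b^{2B}e)$, $\mathrm{Dist}_S=e_0\prod_{i=1}^m((a_1b^Ba_2)^3e)$, $\mathrm{Ver}_S=\prod_{k=1}^{3m}[v_{4k-3}D_kv_{4k-3}\,v_{4k-2}D_kv_{4k-2}\,v_{4k-1}E_kv_{4k-1}\,v_{4k}F_kv_{4k}]$, and $w_S=\mathrm{Load}_S\mathrm{Dist}_S\mathrm{Ver}_S$. *)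

From HB Require Import structures.
From mathcomp Require Import all_boot.
Set Implicit Arguments. Unset Strict Implicit. Unset Printing Implicit Defensive.

Inductive sym := a1 | a2 | b | e0 | e | c1 | c2 | sx | sy.

Definition sym_eqb (s t : sym) : bool :=
  match s, t with
  | a1, a1 | a2, a2 | b, b | e0, e0 | e, e | c1, c1 | c2, c2 | sx, sx | sy, sy => true
  | _, _ => false
  end.
Lemma sym_eqP : Equality.axiom sym_eqb.
Proof. by case; case; constructor. Qed.
HB.instance Definition _ := hasDecEq.Build sym sym_eqP.

Definition word := seq sym.

(* A configuration Q || x : (queue contents, remaining input). *)
Definition config := (word * word)%type.

Inductive qstep : config -> config -> Prop :=
| qstep_push (Q : word) (s : sym) (w : word) : qstep (Q, s :: w) (rcons Q s, w)
| qstep_pop  (Q : word) (s : sym) (w : word) : qstep (s :: Q, s :: w) (Q, w).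

Definition computation (c : nat -> config) (k : nat) : Prop :=
  forall j, j < k -> qstep (c j) (c j.+1).

Definition accepting (w : word) (c : nat -> config) (k : nat) : Prop :=
  [/\ computation c k, c 0 = ([::], w) & c k = ([::], [::])].

Definition rep (i : nat) (u : word) : word := flatten (nseq i u).

Definition three_partition (S : seq nat) (m B : nat) : Prop :=
  [/\ 0 < m, size S = 3 * m, sumn S = m * B,
      (forall n, n \in S -> (B < 4 * n) && (2 * n < B)) &
      sorted geq S].

Section W.
Variables (S : seq nat) (m B : nat).

(* n_k, 1-indexed *)
Definition nk (k : nat) : nat := nth 0 S k.-1.

Definition U (l : nat) : word := [:: a1; a1] ++ nseq l b ++ [:: a2; a2].
Definition v (l : nat) : word := [:: c1] ++ nseq l sx ++ nseq l sy ++ [:: c2].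
Definition D (k : nat) : word := rep (3 * m - k + 1) (U (nk k)).
Definition E (k : nat) : word :=
  rep (3 * m - k) (U B) ++ [:: a1] ++ nseq (nk k) b ++ [:: a2] ++ rep (3 * m - k) (U B).
Definition F (k : nat) : word := rep (2 * (3 * m - k)) (U B).

Definition bb : word := nseq (2 * B) b.
Definition trip : word := rep 3 ([:: a1] ++ nseq B b ++ [:: a2]).

Definition LoadS : word := e0 :: rep m (bb ++ [:: e]).
Definition DistS : word := e0 :: rep m (trip ++ [:: e]).
Definition VerS : word :=
  flatten [seq v (4 * k - 3) ++ D k ++ v (4 * k - 3)
             ++ v (4 * k - 2) ++ D k ++ v (4 * k - 2)
             ++ v (4 * k - 1) ++ E k ++ v (4 * k - 1)
             ++ v (4 * k) ++ F k ++ v (4 * k) | k <- iota 1 (3 * m)].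
Definition wS : word := LoadS ++ DistS ++ VerS.

End W.

(* The computation c (of length k) passes through
   u1u2u3 || x1x2x3 |-* u2u3z1 || x2x3 |-* u3z1z2 || x3, the first configuration
   being c j0 (or later): x2 is consumed by u2 (with resultant z2). *)
Definition consumed_after (c : nat -> config) (k j0 : nat)
    (u1 u2 u3 x1 x2 x3 : word) : Prop :=
  exists j1 j2 j3 (z1 z2 : word),
    [/\ j0 <= j1, j1 <= j2, j2 <= j3, j3 <= k &
     [/\ c j1 = (u1 ++ u2 ++ u3, x1 ++ x2 ++ x3),
         c j2 = (u2 ++ u3 ++ z1, x2 ++ x3) &
         c j3 = (u3 ++ z1 ++ z2, x3)]].

From mathcomp Require Import all_boot zify.

(* A queue symbol leaves the queue only by matching an equal input symbol, so in
   an accepting run the queue never holds more copies of a letter than the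
   remaining input. The first [e0] of [w_S] must be pushed and can only be matched
   by the second one, so all of Load is pushed first. Afterwards, with [j] blocks
   [b^{2B} e] of Load still queued, the queue holds [j] letters [e] while the
   unread part of Dist holds exactly [j]; hence the [e] closing the next queued
   [b^{2B}] is matched by the [e] closing the next triple, and that [b^{2B}] is
   popped while the triple is read. *)

Set Implicit Arguments. Unset Strict Implicit.

Lemma repS n (u : word) : rep n.+1 u = u ++ rep n u.
Proof. by []. Qed.

Lemma repD n1 n2 (u : word) : rep (n1 + n2) u = rep n1 u ++ rep n2 u.
Proof. by elim: n1 => // n1 IH; rewrite addSn !repS IH catA. Qed.

Lemma rep_around n1 n2 (w : word) (a : sym) :
  rep (n1 + n2.+1) (w ++ [:: a]) = rep n1 (w ++ [:: a]) ++ w ++ a :: rep n2 (w ++ [:: a]).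
Proof. by rewrite repD repS -catA. Qed.

Lemma mem_rep (a : sym) n u : (a \in rep n u) = (0 < n) && (a \in u).
Proof. by elim: n => // n IH; rewrite repS mem_cat IH; case: n {IH} => [|n]; rewrite ?orbF ?orbb. Qed.

Lemma count_rep (p : pred sym) n u : count p (rep n u) = n * count p u.
Proof. by elim: n => // n IH; rewrite repS count_cat IH mulSn. Qed.

Lemma notin_VerS S m B (s : sym) :
  s \notin [:: a1; a2; b; c1; c2; sx; sy] -> s \notin VerS S m B.
Proof.
move=> Hs; apply/flatten_mapP => -[l _].
rewrite /v /D /E /F /U !(mem_cat, mem_rep, mem_nseq, inE).
by case: s Hs; rewrite ?andbF.
Qed.

Lemma cat_marker_inj (s : sym) (T y A x : word) :
  s \notin T -> count_mem s y <= count_mem s x ->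
  T ++ s :: y = A ++ s :: x -> A = T /\ x = y.
Proof.
elim: T A => [|t T IH] [|a A] //=.
- by move=> _ _ [->].
- by move=> _ + [_ Ey]; rewrite Ey count_cat /= eqxx; lia.
- by rewrite inE negb_or => /andP [/negPf Hst _] _ [Ets]; rewrite Ets eqxx in Hst.
- rewrite inE negb_or => /andP [_ HsT] Hcnt [-> Eq].
  by have [-> ->] := IH A HsT Hcnt Eq.
Qed.

Lemma qstep_inv Q x c' : qstep (Q, x) c' ->
  exists a w, x = a :: w /\ (c' = (rcons Q a, w) \/ exists2 Q', Q = a :: Q' & c' = (Q', w)).
Proof.
move=> H; inversion H; subst; exists s, w; split => //.
- by left.
- by right; exists Q0.
Qed.

Section AcceptingRun.
Variables (c : nat -> config) (k : nat).
Hypotheses (Hc : computation c k) (Hk : c k = ([::], [::])).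

Lemma next_config j Q x : j <= k -> c j = (Q, x) -> (Q, x) != ([::], [::]) ->
  exists a w, [/\ x = a :: w, j < k &
    c j.+1 = (rcons Q a, w) \/ exists2 Q', Q = a :: Q' & c j.+1 = (Q', w)].
Proof.
move=> Hjk Hcj Hne; have ltjk : j < k.
  by rewrite ltn_neqAle Hjk andbT; apply: contraNneq Hne => Ejk; rewrite -Hcj Ejk Hk.
have := Hc ltjk; rewrite Hcj => /qstep_inv [a [w [Ex Hstep]]].
by exists a, w.
Qed.

Lemma count_queue_le_input (p : pred sym) j Q x :
  j <= k -> c j = (Q, x) -> count p Q <= count p x.
Proof.
elim: x j Q => [|a w IH] j Q Hjk Hcj.
  have [-> // | HQ] := eqVneq Q [::].
  have Hne : (Q, [::]) != ([::], [::]) :> config by rewrite xpair_eqE negb_and HQ.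
  by have [? [? [//]]] := next_config Hjk Hcj Hne.
have Hne : (Q, a :: w) != ([::], [::]) :> config by rewrite xpair_eqE andbF.
have [a' [w' [[<- <-] ltjk Hstep]]] := next_config Hjk Hcj Hne.
case: Hstep => [Hpush | [Q' -> Hpop]].
- by have := IH _ _ ltjk Hpush; rewrite -cats1 count_cat /=; lia.
- by have := IH _ _ ltjk Hpop => /=; lia.
Qed.

Lemma queue_head_popped j s Q x : j <= k -> c j = (s :: Q, x) ->
  exists p x', [/\ x = p ++ s :: x', j + size p < k,
    c (j + size p) = (s :: Q ++ p, s :: x') & c (j + size p).+1 = (Q ++ p, x')].
Proof.
elim: x j Q => [|a w IH] j Q Hjk Hcj.
  by have [? [? [//]]] := next_config Hjk Hcj isT.
have [_ [_ [[<- <-] ltjk [Hpush | [Q' [Esa <-] Hpop]]]]] := next_config Hjk Hcj isT.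
- have [p [x' [-> ltpk Hcp Hpop]]] := IH _ (rcons Q a) ltjk Hpush.
  exists (a :: p), x'; rewrite /= -addSnnS.
  by split; rewrite // ?Hcp ?Hpop cat_rcons.
- by rewrite -Esa in Hcj *; exists [::], w; rewrite addn0 cats0; split.
Qed.

Lemma queue_prefix_popped u j Q x : j <= k -> c j = (u ++ Q, x) ->
  exists x1 x2 z, [/\ x = x1 ++ x2, j + size x1 <= k & c (j + size x1) = (Q ++ z, x2)].
Proof.
elim: u j Q x => [|s u IH] j Q x Hjk Hcj.
  by exists [::], x, [::]; rewrite addn0 cats0.
have [p [x' [-> ltjk _ Hpop]]] := queue_head_popped Hjk Hcj.
rewrite -catA in Hpop.
have [x1 [x2 [z [-> Hle Hcz]]]] := IH _ _ _ ltjk Hpop.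
have Ej : j + size (p ++ s :: x1) = (j + size p).+1 + size x1.
  by rewrite size_cat /=; lia.
by exists (p ++ s :: x1), x2, (p ++ z); rewrite Ej -!catA in Hcz *; split.
Qed.

Lemma consume_to_marker u s Q x y j :
  j <= k -> c j = (u ++ s :: Q, x ++ s :: y) ->
  s \notin x -> count_mem s y <= count_mem s Q ->
  exists z, [/\ j + size x < k, c (j + size x) = (s :: Q ++ z, s :: y)
    & c (j + size x).+1 = (Q ++ z, y)].
Proof.
move=> Hjk Hcj Hsx Hys.
have [x1 [x2 [z [Ex Hle Hcz]]]] := queue_prefix_popped Hjk Hcj.
have [p [x' [Ex2 ltpk Hcp Hpop]]] := queue_head_popped Hle Hcz.
have Hcnt := count_queue_le_input (pred1 s) ltpk Hpop.
have [Ex1p Ex'] : x1 ++ p = x /\ x' = y.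
  apply: cat_marker_inj Hsx _ _; last by rewrite Ex Ex2 catA.
  by apply: leq_trans Hys (leq_trans _ Hcnt); rewrite -catA count_cat leq_addr.
have Ej : j + size x = j + size x1 + size p by rewrite -Ex1p size_cat addnA.
by exists (z ++ p); rewrite Ej -Ex' -!catA in Hcp Hpop *; split.
Qed.

Lemma push_between_markers s L R j : j <= k -> c j = ([::], s :: L ++ s :: R) ->
  s \notin L -> s \notin R ->
  exists j0, [/\ j0 < k, c j0 = (s :: L, s :: R) & c j0.+1 = (L, R)].
Proof.
move=> Hjk Hcj HsL HsR.
have [_ [_ [[<- <-] ltjk [Hpush | [//]]]]] := next_config Hjk Hcj isT.
have [p [x' [Ex ltpk Hcp Hpop]]] := queue_head_popped ltjk Hpush.
have [Ep Ex'] : p = L /\ x' = R.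
  by apply: cat_marker_inj HsL _ Ex; rewrite (count_memPn HsR).
by exists (j.+1 + size p); rewrite -Ep -Ex'.
Qed.

Section Blocks.
Variables (u x V : word) (s : sym).
Hypotheses (Hsx : s \notin x) (HsV : s \notin V).

Lemma consume_block n Z j : j <= k ->
  c j = (rep n.+1 (u ++ [:: s]) ++ Z, rep n.+1 (x ++ [:: s]) ++ V) ->
  exists z, [/\ j + size x < k,
    c (j + size x) = (s :: rep n (u ++ [:: s]) ++ Z ++ z, s :: rep n (x ++ [:: s]) ++ V)
    & c (j + size x).+1 = (rep n (u ++ [:: s]) ++ Z ++ z, rep n (x ++ [:: s]) ++ V)].
Proof.
move=> Hjk Hcj.
have Hcj' : c j = (u ++ s :: (rep n (u ++ [:: s]) ++ Z), x ++ s :: (rep n (x ++ [:: s]) ++ V)).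
  by rewrite Hcj !repS -!catA.
have Hcnt : count_mem s (rep n (x ++ [:: s]) ++ V) <= count_mem s (rep n (u ++ [:: s]) ++ Z).
  by rewrite !(count_cat, count_rep) /= eqxx (count_memPn Hsx) (count_memPn HsV); nia.
have [z [ltjk Hcx Hnext]] := consume_to_marker Hjk Hcj' Hsx Hcnt.
by exists z; rewrite -catA in Hcx Hnext.
Qed.

Lemma consume_blocks i n Z j : j <= k ->
  c j = (rep (i + n) (u ++ [:: s]) ++ Z, rep (i + n) (x ++ [:: s]) ++ V) ->
  exists Z', j + i * (size x).+1 <= k /\
    c (j + i * (size x).+1) = (rep n (u ++ [:: s]) ++ Z', rep n (x ++ [:: s]) ++ V).
Proof.
elim: i n Z => [|i IH] n Z Hjk Hcj; first by exists Z; rewrite addn0.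
rewrite addSnnS in Hcj; have [Z' [Hle Hci]] := IH _ _ Hjk Hcj.
have [z [ltk _ Hnext]] := consume_block Hle Hci.
have Ej : j + i.+1 * (size x).+1 = (j + i * (size x).+1 + size x).+1 by rewrite mulSn; lia.
by exists (Z' ++ z); rewrite Ej.
Qed.

End Blocks.

End AcceptingRun.

Lemma markers_notin_Load_Dist B n :
  [/\ e \notin trip B, e0 \notin rep n (bb B ++ [:: e]) & e0 \notin rep n (trip B ++ [:: e])].
Proof. by rewrite !(mem_rep, mem_cat, mem_nseq, inE) /= !andbF. Qed.

Unset Implicit Arguments.

Theorem lemma3 (S : seq nat) (m B : nat) :
  three_partition S m B ->
  forall (c : nat -> config) (k : nat),
    accepting (wS S m B) c k ->
    exists j0, j0 <= k /\
      c j0 = (LoadS m B, DistS m B ++ VerS S m B) /\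
      forall i, 1 <= i <= m ->
        consumed_after c k j0
          (e0 :: rep i.-1 (bb B ++ [:: e]))
          (bb B)
          (e :: rep (m - i) (bb B ++ [:: e]))
          (e0 :: rep i.-1 (trip B ++ [:: e]))
          (trip B)
          (e :: rep (m - i) (trip B ++ [:: e]) ++ VerS S m B).
Proof.
move=> _ c k [Hc H0 Hk]; set V := VerS S m B in H0 *.
have [He_trip He0_Load He0_Dist] := markers_notin_Load_Dist B m.
have He_Ver : e \notin V by apply: notin_VerS.
have He0_Ver : e0 \notin V by apply: notin_VerS.
have He0_DV : e0 \notin rep m (trip B ++ [:: e]) ++ V.
  by rewrite mem_cat negb_or He0_Dist.
have Hc_init : c 0 = ([::], e0 :: rep m (bb B ++ [:: e])
                       ++ e0 :: (rep m (trip B ++ [:: e]) ++ V)) by rewrite H0.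
have [j0 [ltj0 Hc0 Hc1]] := push_between_markers Hc Hk (leq0n k) Hc_init He0_Load He0_DV.
exists j0; split; [exact: ltnW | split => // i /andP [i_gt0 le_im]].
have Em : i.-1 + (m - i).+1 = m by lia.
have Hsplit (w : word) (a : sym) :
    rep m (w ++ [:: a]) = rep i.-1 (w ++ [:: a]) ++ w ++ a :: rep (m - i) (w ++ [:: a]).
  by rewrite -rep_around Em.
rewrite -Em -(cats0 (rep _ (bb B ++ _))) in Hc1.
have [Z [le_j2k Hc2]] := consume_blocks Hc Hk He_trip He_Ver ltj0 Hc1.
have [z [lt_j3k Hc3 _]] := consume_block Hc Hk He_trip He_Ver le_j2k Hc2.
set j2 := j0.+1 + i.-1 * (size (trip B)).+1 in le_j2k Hc2 lt_j3k Hc3.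
exists j0, j2, (j2 + size (trip B)), Z, z.
split; [done | exact: leq_trans (leqnSn _) (leq_addr _ _) | exact: leq_addr | exact: ltnW | split].
- by rewrite Hc0 /LoadS /DistS !Hsplit -!catA.
- by rewrite Hc2 !repS -!catA.
- by rewrite Hc3.
Qed.
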